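(* Let $\sigma$ be a strongly erasing $k$-block substitution with $w_\epsilon\ne1^k$ that satisfies the optimality condition. Let $(w^{(n)})_{n\in\mathbb N_0}$ be any sequence of finite binary words. Then there exist $x\in[w^{(0)}]$ and positive integers $h_1,h_2,\dots$ such that $f_\sigma^{h_n}(x)\in[w^{(n)}]$ for every $n\in\mathbb N$.
   Context: Notation: $\mathbb I=[0,1]$. $\{0,1\}^*$ and $\{0,1\}^\omega$ denote finite and infinite binary words, and $\epsilon$ is the empty word. For a word $w$, set $0.w=\sum_iw_i2^{-i}$. For $x\in(0,1]$, $\widetilde x$ is the unique infinite binary expansion of $x$ not ending in $0^\infty$. For $w\in\{0,1\}^*$, the cylinder is $[w]=\{x\in\mathbb I: x=0.wv\text{ for some finite or infinite word } v\}$. Fix $k\ge2$. An erasing $k$-block substitution is a map $\sigma:\{0,1\}^k\to\{0,1\}^*$ with exactly one block $w_\epsilon$ such that $\sigma(w_\epsilon)=\epsilon$. It acts blockwise on infinite words and on finite words of length a multiple of $k$. $k$-rounding: a $k$-rounding of $w$ is any word $wv$ whose length is the least multiple of $k$ that is $\ge|w|$; if $|w|$ is a multiple of $k$, the only $k$-rounding of $w$ is $w$. $\sigma$ is strongly erasing if for every $w\in\{0,1\}^*$ there exist $n\in\mathbb N$ and words $r_0,\dots,r_{n-1}$ such that $r_0$ is a $k$-rounding of $w$, $r_j$ is a $k$-rounding of $\sigma(r_{j-1})$ for $1\le j\le n-1$, and $\sigma(r_{n-1})=\epsilon$. The map $f_\sigma:\mathbb I\to\mathbb I$ is defined by $f_\sigma(x)=0.\sigma(\widetilde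 x)$ if $x\in(0,1]$ and $\widetilde x\neq w_\epsilon^\infty$, and $f_\sigma(x)=0$ otherwise. Optimality condition: every $w\in\{0,1\}^\omega$ can be written as $w=\prod_{i\ge1}\sigma(b_i)$ with blocks $b_i\in\{0,1\}^k$ satisfying $\sigma(b_i)\ne\epsilon$. *)

From Stdlib Require Import Reals Lra Lia Arith List ClassicalEpsilon.
From Coquelicot Require Import Coquelicot.
Import ListNotations.
Open Scope R_scope.

(* Finite binary words: list bool.  Infinite binary words: nat -> bool,
   indexed from 0 (so w 0 is the first letter w_1 of the paper). *)
Definition fword := list bool.
Definition iword := nat -> bool.

Definition bit (b : bool) : R := if b then 1 else 0.

Fixpoint fin_value (w : fword) : R :=
  match w with
  | [] => 0
  | b :: l => bit b / 2 + fin_value l / 2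
  end.

Definition inf_value (w : iword) : R :=
  Series (fun i => bit (w i) / 2 ^ (S i)).

Definition prepend (w : fword) (v : iword) : iword :=
  fun i => if (i <? length w)%nat then nth i w false else v (i - length w)%nat.

Definition in_cyl (w : fword) (x : R) : Prop :=
  0 <= x <= 1 /\
  ((exists v : fword, x = fin_value (w ++ v)) \/
   (exists v : iword, x = inf_value (prepend w v))).

Definition ends_in_zeros (e : iword) : Prop :=
  exists N, forall i, (N <= i)%nat -> e i = false.

(* x~ : the unique infinite binary expansion of x in (0,1] not ending in 0^oo
   (chosen by Hilbert's epsilon; the property determines it uniquely). *)
Definition tilde (x : R) : iword :=
  epsilon (inhabits (fun _ => false))
    (fun e : iword => inf_value e = x /\ ~ ends_in_zeros e).

(* Blockwise action of sigma on a finite word (length multiple of k). *)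
Fixpoint apply_fin_aux (k : nat) (sigma : fword -> fword) (fuel : nat)
    (w : fword) : fword :=
  match fuel with
  | O => []
  | S f => match w with
           | [] => []
           | _ => sigma (firstn k w) ++ apply_fin_aux k sigma f (skipn k w)
           end
  end.

Definition apply_fin (k : nat) (sigma : fword -> fword) (w : fword) : fword :=
  apply_fin_aux k sigma (length w) w.

(* the j-th k-block b_{j+1} of an infinite word *)
Definition block (k : nat) (w : iword) (j : nat) : fword :=
  map (fun i => w (j * k + i)%nat) (seq 0 k).

Fixpoint prefix_len (ws : nat -> fword) (j : nat) : nat :=
  match j with
  | O => O
  | S j' => (prefix_len ws j' + length (ws j'))%nat
  end.

Definition concat_value (ws : nat -> fword) : R :=
  Series (fun j => fin_value (ws j) / 2 ^ (prefix_len ws j)).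

Definition erasing_subst (k : nat) (sigma : fword -> fword) (weps : fword) : Prop :=
  length weps = k /\
  (forall b : fword, length b = k -> (sigma b = [] <-> b = weps)).

Definition is_krounding (k : nat) (w r : fword) : Prop :=
  (exists v, r = w ++ v) /\
  Nat.modulo (length r) k = 0%nat /\ (length w <= length r)%nat /\
  (forall m : nat, Nat.modulo m k = 0%nat -> (length w <= m)%nat ->
                   (length r <= m)%nat).

Definition strongly_erasing (k : nat) (sigma : fword -> fword) : Prop :=
  forall w : fword, exists (n : nat) (r : nat -> fword),
    (0 < n)%nat /\
    is_krounding k w (r 0%nat) /\
    (forall j, (1 <= j <= n - 1)%nat ->
       is_krounding k (apply_fin k sigma (r (j - 1)%nat)) (r j)) /\
    apply_fin k sigma (r (n - 1)%nat) = [].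

Definition optimal (k : nat) (sigma : fword -> fword) : Prop :=
  forall w : iword, exists b : nat -> fword,
    (forall i, length (b i) = k /\ sigma (b i) <> []) /\
    (forall j q, (q < length (sigma (b j)))%nat ->
       w (prefix_len (fun i => sigma (b i)) j + q)%nat = nth q (sigma (b j)) false).

Definition f_sigma (k : nat) (sigma : fword -> fword) (weps : fword) (x : R) : R :=
  if Rlt_dec 0 x then
    if Rle_dec x 1 then
      match excluded_middle_informative
              (forall i, tilde x i = nth (Nat.modulo i k) weps false) with
      | left _ => 0
      | right _ => concat_value (fun j => sigma (block k (tilde x) j))
      end
    else 0
  else 0.

From Stdlib Require Import Reals Lra Lia Arith List ClassicalEpsilon Classical FunctionalExtensionality.
From Coquelicot Require Import Coquelicot.
Import ListNotations.
Open Scope R_scope.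

(* We work with infinite binary words rather than reals:
   - Binary expansions.  0.e determines e among words with infinitely many ones
     (so tilde (0.e) = e), and the value of an infinite concatenation of finite
     words is the value of the concatenated word.  Hence on such words f_sigma
     is the blockwise action of sigma (f_sigma_step).
   - Lifting.  By optimality every infinite word is sigma(t) with no block of t
     erased; if sigma(t) is aperiodic so is t.  Strong erasure then shows that
     every finite word P "covers": for some m >= 1, every aperiodic z is reached
     in m sigma-steps from an aperiodic word beginning with P (covers_exists).
   - Construction.  Stage n extends the current finite word P, by covering an
     aperiodic word beginning with W (n+1), so that its (h (n+1))-th image begins
     with W (n+1) while its first n images stay rich (a 1 and a surviving block
     beyond position n).  The nested limit of these finite words is an orbit
     E 0 -> E 1 -> ... of sigma whose terms have infinitely many ones
     (limit_orbit), and x = 0.(E 0). *)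

Fixpoint partial_sum (f : nat -> R) (n : nat) : R :=
  match n with O => 0 | S n => partial_sum f n + f n end.

Lemma partial_sum_is_series (f : nat -> R) (l : R) :
  is_lim_seq (partial_sum f) l -> is_series f l.
Proof.
  intros H. apply is_lim_seq_incr_1 in H.
  apply (is_lim_seq_ext _ (sum_n f)) in H; [exact H|].
  intros n; induction n.
  - rewrite sum_O; simpl; ring.
  - rewrite sum_Sn, <- IHn; reflexivity.
Qed.

Lemma partial_sum_ext (f g : nat -> R) (n : nat) :
  (forall i, (i < n)%nat -> f i = g i) -> partial_sum f n = partial_sum g n.
Proof.
  induction n as [|n IH]; intros H; simpl; [reflexivity|].
  rewrite IH, H; auto.
Qed.

Lemma pow2_pos (n : nat) : 0 < 2 ^ n.
Proof. apply pow_lt; lra. Qed.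

Definition digit_value (e : iword) (i : nat) : R := bit (e i) / 2 ^ (S i).

Definition tail (n : nat) (e : iword) : iword := fun i => e (n + i)%nat.

Lemma digit_value_bounds (e : iword) (i : nat) : 0 <= digit_value e i <= / 2 ^ (S i).
Proof.
  unfold digit_value, Rdiv. pose proof (Rinv_0_lt_compat _ (pow2_pos (S i))).
  destruct (e i); cbn [bit]; lra.
Qed.

Lemma partial_sum_digit_bounds (e : iword) (n : nat) :
  0 <= partial_sum (digit_value e) n <= 1 - / 2 ^ n.
Proof.
  induction n as [|n IH]; simpl.
  - rewrite Rinv_1. lra.
  - pose proof (digit_value_bounds e n) as Hd. pose proof (pow2_pos n).
    assert (Hinv : / (2 * 2 ^ n) = / 2 ^ n / 2) by (field; lra).
    simpl in Hd. rewrite Hinv in Hd |- *. lra.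
Qed.

(* The partial sums are nondecreasing and bounded, hence converge to [inf_value e]. *)
Lemma inf_value_lim (e : iword) : is_lim_seq (partial_sum (digit_value e)) (inf_value e).
Proof.
  assert (Hex : ex_finite_lim_seq (partial_sum (digit_value e))).
  { apply (ex_finite_lim_seq_incr _ 1).
    - intros n; simpl. pose proof (digit_value_bounds e n); lra.
    - intros n; pose proof (partial_sum_digit_bounds e n).
      pose proof (Rinv_0_lt_compat _ (pow2_pos n)). lra. }
  destruct Hex as [l Hl].
  pose proof (is_series_unique _ _ (partial_sum_is_series _ _ Hl)) as Hs.
  unfold inf_value. unfold digit_value in Hs. rewrite Hs. exact Hl.
Qed.

Lemma partial_sum_split (e : iword) (n m : nat) :
  partial_sum (digit_value e) (n + m) =
  partial_sum (digit_value e) n + partial_sum (digit_value (tail n e)) m / 2 ^ n.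
Proof.
  pose proof (pow2_pos n).
  induction m as [|m IH].
  - rewrite Nat.add_0_r; simpl; field; lra.
  - rewrite Nat.add_succ_r. simpl. rewrite IH. unfold digit_value, tail.
    replace (2 ^ S (n + m)) with (2 ^ n * 2 ^ S m) by (rewrite <- pow_add; f_equal; lia).
    pose proof (pow2_pos m). simpl. field. lra.
Qed.

Lemma inf_value_split (e : iword) (n : nat) :
  inf_value e = partial_sum (digit_value e) n + inf_value (tail n e) / 2 ^ n.
Proof.
  pose proof (proj1 (is_lim_seq_incr_n _ n _) (inf_value_lim e)) as H1.
  assert (H2 : is_lim_seq (fun m => partial_sum (digit_value e) (m + n))
                 (partial_sum (digit_value e) n + inf_value (tail n e) / 2 ^ n)).
  { apply (is_lim_seq_ext (fun m => partial_sum (digit_value e) n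
             + partial_sum (digit_value (tail n e)) m * / 2 ^ n)).
    - intros m. rewrite Nat.add_comm, partial_sum_split. reflexivity.
    - apply is_lim_seq_plus'; [apply is_lim_seq_const|].
      apply (is_lim_seq_scal_r _ (/ 2 ^ n) (inf_value (tail n e))), inf_value_lim. }
  apply is_lim_seq_unique in H1. apply is_lim_seq_unique in H2.
  rewrite H1 in H2. injection H2; auto.
Qed.

Lemma inf_value_bounds (e : iword) : 0 <= inf_value e <= 1.
Proof.
  split.
  - apply (is_lim_seq_le (fun _ => 0) (partial_sum (digit_value e)) 0 (inf_value e)).
    + intros n; apply partial_sum_digit_bounds.
    + apply is_lim_seq_const.
    + apply inf_value_lim.
  - apply (is_lim_seq_le (partial_sum (digit_value e)) (fun _ => 1) (inf_value e) 1).
    + intros n; pose proof (partial_sum_digit_bounds e n).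
      pose proof (Rinv_0_lt_compat _ (pow2_pos n)). lra.
    + apply inf_value_lim.
    + apply is_lim_seq_const.
Qed.

Definition infinitely_many_ones (e : iword) : Prop :=
  forall L, exists i, (L <= i)%nat /\ e i = true.

Lemma infinitely_many_ones_iff (e : iword) : infinitely_many_ones e <-> ~ ends_in_zeros e.
Proof.
  split.
  - intros H [N HN]. destruct (H N) as [i [Hi Hei]]. rewrite HN in Hei; auto; discriminate.
  - intros H L. apply NNPP. intros Hn. apply H. exists L. intros i Hi.
    destruct (e i) eqn:E; auto. exfalso; apply Hn; exists i; auto.
Qed.

Lemma infinitely_many_ones_tail (e : iword) (n : nat) :
  infinitely_many_ones e -> infinitely_many_ones (tail n e).
Proof.
  intros H L. destruct (H (n + L)%nat) as [i [Hi Hei]].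
  exists (i - n)%nat. unfold tail. replace (n + (i - n))%nat with i by lia. split; [lia|auto].
Qed.

Lemma inf_value_pos (e : iword) (i : nat) : e i = true -> 0 < inf_value e.
Proof.
  intros H. rewrite (inf_value_split e (S i)). simpl.
  pose proof (partial_sum_digit_bounds e i). pose proof (inf_value_bounds (tail (S i) e)).
  pose proof (pow2_pos i).
  assert (0 < digit_value e i) by (unfold digit_value; rewrite H; simpl; apply Rdiv_lt_0_compat; lra).
  assert (0 <= inf_value (tail (S i) e) / (2 * 2 ^ i)) by (apply Rcomplements.Rdiv_le_0_compat; lra).
  lra.
Qed.

Lemma inf_value_lt_first_difference (e e' : iword) (i : nat) :
  (forall j, (j < i)%nat -> e j = e' j) -> e i = false -> e' i = true ->
  infinitely_many_ones e' -> inf_value e < inf_value e'.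
Proof.
  intros Hpre H0 H1 Ho.
  rewrite (inf_value_split e (S i)), (inf_value_split e' (S i)). simpl.
  rewrite (partial_sum_ext (digit_value e) (digit_value e') i)
    by (intros; unfold digit_value; rewrite Hpre; auto).
  assert (T0 : digit_value e i = 0) by (unfold digit_value; rewrite H0; simpl; lra).
  assert (T1 : digit_value e' i = 1 / (2 * 2 ^ i)) by (unfold digit_value; rewrite H1; simpl; lra).
  rewrite T0, T1.
  destruct (infinitely_many_ones_tail e' (S i) Ho 0%nat) as [j [_ Hj]].
  pose proof (inf_value_pos _ _ Hj). pose proof (inf_value_bounds (tail (S i) e)).
  pose proof (pow2_pos i).
  assert (inf_value (tail (S i) e) / (2 * 2 ^ i) <= 1 / (2 * 2 ^ i)).
  { apply Rmult_le_compat_r; [left; apply Rinv_0_lt_compat|]; lra. }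
  assert (0 < inf_value (tail (S i) e') / (2 * 2 ^ i)) by (apply Rdiv_lt_0_compat; lra).
  lra.
Qed.

Lemma inf_value_inj (e e' : iword) :
  infinitely_many_ones e -> infinitely_many_ones e' -> inf_value e = inf_value e' -> e = e'.
Proof.
  intros He He' Hv. apply functional_extensionality. intros i.
  induction i as [i IH] using lt_wf_ind.
  destruct (e i) eqn:E1, (e' i) eqn:E2; auto; exfalso.
  - assert (inf_value e' < inf_value e)
      by (apply (inf_value_lt_first_difference e' e i); auto; intros j Hj; symmetry; auto).
    lra.
  - assert (inf_value e < inf_value e') by (apply (inf_value_lt_first_difference e e' i); auto).
    lra.
Qed.

Lemma tilde_inf_value (e : iword) : infinitely_many_ones e -> tilde (inf_value e) = e.
Proof.
  intros He. unfold tilde.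
  match goal with |- epsilon ?inh ?P = _ =>
    destruct (epsilon_spec inh P) as [Hval Hends] end.
  - exists e. split; [reflexivity|]. apply infinitely_many_ones_iff; auto.
  - apply inf_value_inj; auto. apply infinitely_many_ones_iff; auto.
Qed.

Definition is_concat (ws : nat -> fword) (E : iword) : Prop :=
  forall j q, (q < length (ws j))%nat -> E (prefix_len ws j + q)%nat = nth q (ws j) false.

Lemma prefix_len_mono (ws : nat -> fword) (j j' : nat) :
  (j <= j')%nat -> (prefix_len ws j <= prefix_len ws j')%nat.
Proof. induction 1; simpl; lia. Qed.

Lemma fin_value_partial_sum (w : fword) (a : nat) (E : iword) :
  (forall q, (q < length w)%nat -> E (a + q)%nat = nth q w false) ->
  fin_value w / 2 ^ a =
  partial_sum (digit_value E) (a + length w) - partial_sum (digit_value E) a.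
Proof.
  revert a. induction w as [|b l IH]; intros a H.
  - simpl. rewrite Nat.add_0_r. unfold Rdiv; ring.
  - cbn [fin_value length]. rewrite Nat.add_succ_r.
    assert (HI : fin_value l / 2 ^ S a = partial_sum (digit_value E) (S (a + length l))
                                        - partial_sum (digit_value E) (S a)).
    { apply IH. intros q Hq. replace (S a + q)%nat with (a + S q)%nat by lia.
      apply H; simpl; lia. }
    pose proof (H 0%nat ltac:(simpl; lia)) as Hb. rewrite Nat.add_0_r in Hb. simpl in Hb.
    replace (partial_sum (digit_value E) (S (a + length l)))
      with (fin_value l / 2 ^ S a + partial_sum (digit_value E) (S a)) by lra.
    simpl partial_sum. unfold digit_value. rewrite Hb.
    pose proof (pow2_pos a). simpl. field. lra.
Qed.

Lemma concat_partial_sum (ws : nat -> fword) (E : iword) (J : nat) :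
  is_concat ws E ->
  partial_sum (fun j => fin_value (ws j) / 2 ^ prefix_len ws j) J =
  partial_sum (digit_value E) (prefix_len ws J).
Proof.
  intros H. induction J as [|J IH]; [reflexivity|].
  simpl partial_sum at 1. rewrite IH. simpl prefix_len.
  rewrite (fin_value_partial_sum (ws J) (prefix_len ws J) E); [ring|].
  intros q Hq. apply H; auto.
Qed.

Lemma concat_value_eq (ws : nat -> fword) (E : iword) :
  is_concat ws E -> (forall L, exists J, (L <= prefix_len ws J)%nat) ->
  concat_value ws = inf_value E.
Proof.
  intros H Hunb. unfold concat_value.
  apply is_series_unique, partial_sum_is_series.
  apply (is_lim_seq_ext (fun J => partial_sum (digit_value E) (prefix_len ws J))).
  { intros J; symmetry; apply concat_partial_sum; auto. }
  apply (is_lim_seq_subseq (partial_sum (digit_value E)) (inf_value E) (prefix_len ws)).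
  - intros P [N HN]. destruct (Hunb N) as [J0 HJ0]. exists J0. intros n Hn.
    apply HN. pose proof (prefix_len_mono ws J0 n Hn). lia.
  - apply inf_value_lim.
Qed.

Definition is_prefix (A : fword) (e : iword) : Prop :=
  forall i, (i < length A)%nat -> nth i A false = e i.

Definition prefix (A B : fword) : Prop := exists C, B = A ++ C.

Definition first_letters (N : nat) (y : iword) : fword := map y (seq 0 N).

Lemma nth_map_seq0 (f : nat -> bool) (n m : nat) (d : bool) :
  (n < m)%nat -> nth n (map f (seq 0 m)) d = f n.
Proof.
  intros H. rewrite (nth_indep _ d (f 0%nat)) by (rewrite length_map, length_seq; lia).
  rewrite map_nth, seq_nth by lia. reflexivity.
Qed.

Lemma prefix_nth (A B : fword) (i : nat) :
  prefix A B -> (i < length A)%nat -> nth i A false = nth i B false.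
Proof. intros [C ->] Hi. rewrite app_nth1; auto. Qed.

Lemma prefix_length (A B : fword) : prefix A B -> (length A <= length B)%nat.
Proof. intros [C ->]; rewrite length_app; lia. Qed.

Lemma prefix_refl (A : fword) : prefix A A.
Proof. exists []; rewrite app_nil_r; auto. Qed.

Lemma prefix_trans (A B C : fword) : prefix A B -> prefix B C -> prefix A C.
Proof. intros [D ->] [E ->]. exists (D ++ E). rewrite app_assoc; auto. Qed.

Lemma is_prefix_prefix (A B : fword) (e : iword) :
  prefix A B -> is_prefix B e -> is_prefix A e.
Proof.
  intros H HB i Hi. rewrite (prefix_nth A B i H Hi). apply HB.
  pose proof (prefix_length _ _ H); lia.
Qed.

Lemma is_prefix_comparable (A B : fword) (e : iword) :
  is_prefix A e -> is_prefix B e -> (length A <= length B)%nat -> prefix A B.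
Proof.
  intros HA HB Hl. exists (skipn (length A) B).
  rewrite <- (firstn_skipn (length A) B) at 1. f_equal.
  apply nth_ext with (d := false) (d' := false); rewrite length_firstn; [lia|].
  intros n Hn. rewrite nth_firstn.
  destruct (n <? length A) eqn:E; [|apply Nat.ltb_ge in E; lia].
  rewrite HA, HB by lia. reflexivity.
Qed.

Lemma is_prefix_firstn (A : fword) (e : iword) (n : nat) :
  is_prefix A e -> is_prefix (firstn n A) e.
Proof.
  intros H i Hi. rewrite length_firstn in Hi. rewrite nth_firstn.
  destruct (i <? n) eqn:E; [|apply Nat.ltb_ge in E; lia]. apply H; lia.
Qed.

Lemma first_letters_is_prefix (N : nat) (y : iword) : is_prefix (first_letters N y) y.
Proof.
  intros i Hi. unfold first_letters in *. rewrite length_map, length_seq in Hi.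
  apply nth_map_seq0; lia.
Qed.

Lemma first_letters_length (N : nat) (y : iword) : length (first_letters N y) = N.
Proof. unfold first_letters; rewrite length_map, length_seq; auto. Qed.

Lemma prepend_lt (w : fword) (v : iword) (i : nat) :
  (i < length w)%nat -> prepend w v i = nth i w false.
Proof. intros H. unfold prepend. apply Nat.ltb_lt in H. rewrite H. auto. Qed.

Lemma prepend_ge (w : fword) (v : iword) (i : nat) :
  (length w <= i)%nat -> prepend w v i = v (i - length w)%nat.
Proof. intros H. unfold prepend. apply Nat.ltb_ge in H. rewrite H. auto. Qed.

Lemma is_prefix_prepend (w : fword) (v : iword) : is_prefix w (prepend w v).
Proof. intros i Hi. rewrite prepend_lt; auto. Qed.

Lemma prepend_tail (A : fword) (y : iword) :
  is_prefix A y -> prepend A (tail (length A) y) = y.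
Proof.
  intros H. apply functional_extensionality. intros i.
  destruct (Nat.lt_ge_cases i (length A)).
  - rewrite prepend_lt; auto.
  - rewrite prepend_ge; auto. unfold tail. f_equal. lia.
Qed.

Fixpoint concat_upto (ws : nat -> fword) (c : nat) : fword :=
  match c with O => [] | S c => concat_upto ws c ++ ws c end.

Lemma concat_upto_ext (ws ws' : nat -> fword) (c : nat) :
  (forall b, (b < c)%nat -> ws b = ws' b) -> concat_upto ws c = concat_upto ws' c.
Proof. induction c as [|c IH]; intros H; simpl; auto. rewrite IH, H; auto. Qed.

Lemma prefix_len_ext (ws ws' : nat -> fword) (c : nat) :
  (forall b, (b < c)%nat -> ws b = ws' b) -> prefix_len ws c = prefix_len ws' c.
Proof. induction c as [|c IH]; intros H; simpl; auto. rewrite IH, H; auto. Qed.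

Lemma concat_upto_length (ws : nat -> fword) (c : nat) :
  length (concat_upto ws c) = prefix_len ws c.
Proof. induction c as [|c IH]; simpl; auto. rewrite length_app, IH; auto. Qed.

Lemma concat_upto_nth (ws : nat -> fword) (c b q : nat) :
  (b < c)%nat -> (q < length (ws b))%nat ->
  nth (prefix_len ws b + q) (concat_upto ws c) false = nth q (ws b) false.
Proof.
  induction c as [|c IH]; intros Hb Hq; [lia|]. simpl.
  destruct (Nat.eq_dec b c) as [->|Hne].
  - rewrite app_nth2; rewrite concat_upto_length; [f_equal|]; lia.
  - pose proof (prefix_len_mono ws (S b) c ltac:(lia)). simpl in *.
    rewrite app_nth1 by (rewrite concat_upto_length; lia). apply IH; lia.
Qed.

Lemma prefix_len_locate (ws : nat -> fword) (c p : nat) :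
  (p < prefix_len ws c)%nat ->
  exists b q, (b < c)%nat /\ (q < length (ws b))%nat /\ p = (prefix_len ws b + q)%nat.
Proof.
  induction c as [|c IH]; intros Hp; simpl in Hp; [lia|].
  destruct (Nat.lt_ge_cases p (prefix_len ws c)) as [Hlt|Hge].
  - destruct (IH Hlt) as [b [q [H1 [H2 H3]]]]. exists b, q. repeat split; auto; lia.
  - exists c, (p - prefix_len ws c)%nat. repeat split; lia.
Qed.

Lemma prefix_len_add (ws ws' : nat -> fword) (c d : nat) :
  (forall b, ws (c + b)%nat = ws' b) ->
  prefix_len ws (c + d) = (prefix_len ws c + prefix_len ws' d)%nat.
Proof.
  intros H; induction d as [|d IH]; [rewrite Nat.add_0_r; simpl; lia|].
  rewrite Nat.add_succ_r. simpl. rewrite IH, H. lia.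
Qed.

Lemma in_cyl_is_prefix (w : fword) (e : iword) : is_prefix w e -> in_cyl w (inf_value e).
Proof.
  intros H. split; [apply inf_value_bounds|]. right.
  exists (tail (length w) e). rewrite prepend_tail; auto.
Qed.

Lemma eventually_forall_le (Q : nat -> nat -> Prop) (n : nat) :
  (forall j, (j <= n)%nat -> exists N0, forall N, (N0 <= N)%nat -> Q j N) ->
  exists N0, forall N, (N0 <= N)%nat -> forall j, (j <= n)%nat -> Q j N.
Proof.
  induction n as [|n IH]; intros H.
  - destruct (H 0%nat (le_n 0)) as [N0 HN0]. exists N0. intros N HN j Hj.
    replace j with 0%nat by lia. auto.
  - destruct IH as [N1 HN1]; [intros; apply H; lia|].
    destruct (H (S n) (le_n _)) as [N2 HN2]. exists (Nat.max N1 N2). intros N HN j Hj.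
    destruct (Nat.eq_dec j (S n)) as [->|]; [apply HN2; lia|apply HN1; lia].
Qed.

Definition eventually_periodic (e : iword) : Prop :=
  exists N p, (0 < p)%nat /\ forall i, (N <= i)%nat -> e (i + p)%nat = e i.

Lemma aperiodic_ones (e : iword) : ~ eventually_periodic e -> infinitely_many_ones e.
Proof.
  intros H L. apply NNPP. intros Hno. apply H. exists L, 1%nat. split; [lia|].
  assert (Hz : forall j, (L <= j)%nat -> e j = false).
  { intros j Hj. destruct (e j) eqn:E; auto. exfalso; apply Hno; exists j; auto. }
  intros i Hi. rewrite !Hz by lia. reflexivity.
Qed.

Lemma eventually_periodic_prepend (w : fword) (s : iword) :
  eventually_periodic (prepend w s) -> eventually_periodic s.
Proof.
  intros [N [p [Hp H]]]. exists N, p. split; auto. intros i Hi.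
  specialize (H (i + length w)%nat ltac:(lia)). rewrite !prepend_ge in H by lia.
  replace (i + length w + p - length w)%nat with (i + p)%nat in H by lia.
  replace (i + length w - length w)%nat with i in H by lia. exact H.
Qed.

Lemma eventually_periodic_tail (n : nat) (e : iword) :
  eventually_periodic (tail n e) -> eventually_periodic e.
Proof.
  intros [N [p [Hp H]]]. exists (n + N)%nat, p. split; auto. intros i Hi.
  specialize (H (i - n)%nat ltac:(lia)). unfold tail in H.
  replace (n + (i - n + p))%nat with (i + p)%nat in H by lia.
  replace (n + (i - n))%nat with i in H by lia. exact H.
Qed.

Lemma periodic_multiple (e : iword) (N p : nat) :
  (forall i, (N <= i)%nat -> e (i + p)%nat = e i) ->
  forall a i, (N <= i)%nat -> e (i + p * a)%nat = e i.
Proof.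
  intros H a; induction a as [|a IH]; intros i Hi; [rewrite Nat.mul_0_r, Nat.add_0_r; auto|].
  replace (i + p * S a)%nat with ((i + p * a) + p)%nat by lia. rewrite H, IH; auto; lia.
Qed.

(* The indicator word of {2^a - 1 : a in N}; its gaps grow, so it is aperiodic. *)
Definition powers_of_two_word : iword :=
  fun i => existsb (fun a => Nat.eqb (2 ^ a) (S i)) (seq 0 (S i)).

Lemma powers_of_two_word_aperiodic : ~ eventually_periodic powers_of_two_word.
Proof.
  intros [N [p [Hp H]]]. set (a := (N + p)%nat).
  assert (Ha : (a < 2 ^ a)%nat) by (apply Nat.pow_gt_lin_r; lia).
  assert (Htrue : powers_of_two_word (2 ^ a - 1)%nat = true).
  { apply existsb_exists. exists a. rewrite in_seq, Nat.eqb_eq. lia. }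
  assert (Hfalse : powers_of_two_word (2 ^ a - 1 + p)%nat = false).
  { apply Bool.not_true_iff_false. intros Hex.
    apply existsb_exists in Hex. destruct Hex as [b [_ Hb]]. apply Nat.eqb_eq in Hb.
    destruct (Nat.le_gt_cases b a) as [Hba|Hab].
    - pose proof (Nat.pow_le_mono_r 2 b a ltac:(lia) Hba). lia.
    - pose proof (Nat.pow_le_mono_r 2 (S a) b ltac:(lia) Hab). simpl in *. lia. }
  specialize (H (2 ^ a - 1)%nat ltac:(lia)). rewrite Htrue, Hfalse in H. discriminate.
Qed.

Lemma concat_eventually_periodic (ws : nat -> fword) (s : iword) (N p : nat) :
  (0 < p)%nat -> (forall b, ws b <> []) ->
  (forall b, (N <= b)%nat -> ws (b + p)%nat = ws b) ->
  is_concat ws s -> eventually_periodic s.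
Proof.
  intros Hp Hne Hper Hc.
  set (D := (prefix_len ws (N + p) - prefix_len ws N)%nat).
  assert (Hgrow : forall a b, (prefix_len ws a + b <= prefix_len ws (a + b))%nat).
  { intros a b; induction b as [|b IH]; [rewrite !Nat.add_0_r; lia|].
    replace (a + S b)%nat with (S (a + b)) by lia. simpl.
    destruct (ws (a + b)%nat) eqn:E; [exfalso; exact (Hne _ E)|]. simpl. lia. }
  assert (HD : forall b, (N <= b)%nat -> prefix_len ws (b + p) = (prefix_len ws b + D)%nat).
  { intros b Hb. induction Hb as [|b Hb IH].
    - unfold D. pose proof (prefix_len_mono ws N (N + p) ltac:(lia)). lia.
    - replace (S b + p)%nat with (S (b + p)) by lia. simpl. rewrite IH, Hper by lia. lia. }
  exists (prefix_len ws N), D. split; [unfold D; pose proof (Hgrow N p); lia|].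
  intros i Hi.
  assert (Hlt : (i < prefix_len ws (S i))%nat) by (pose proof (Hgrow 0%nat (S i)); simpl in *; lia).
  destruct (prefix_len_locate ws (S i) i Hlt) as [b [q [_ [Hq ->]]]].
  assert (HbN : (N <= b)%nat).
  { destruct (Nat.lt_ge_cases b N) as [Hlt'|]; auto.
    pose proof (prefix_len_mono ws (S b) N Hlt'). simpl in *. lia. }
  replace (prefix_len ws b + q + D)%nat with (prefix_len ws (b + p) + q)%nat by (rewrite HD; lia).
  rewrite (Hc (b + p)%nat q) by (rewrite Hper; auto).
  rewrite (Hc b q), Hper by auto. reflexivity.
Qed.

Section BlockMap.

Variable k : nat.
Variable sigma : fword -> fword.
Hypothesis k_pos : (0 < k)%nat.

Lemma apply_fin_aux_fuel (f f' : nat) (Q : fword) :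
  (length Q <= f)%nat -> (length Q <= f')%nat ->
  apply_fin_aux k sigma f Q = apply_fin_aux k sigma f' Q.
Proof.
  revert f' Q. induction f as [|f IH]; intros f' Q H H'.
  - destruct Q; simpl in H; [|lia]. destruct f'; reflexivity.
  - destruct Q as [|a Q']; [destruct f'; reflexivity|].
    destruct f' as [|f'']; simpl in H'; [lia|].
    simpl. f_equal. apply IH; rewrite length_skipn; cbn [length] in *; lia.
Qed.

Lemma apply_fin_cons (Q : fword) : Q <> [] ->
  apply_fin k sigma Q = sigma (firstn k Q) ++ apply_fin k sigma (skipn k Q).
Proof.
  intros HQ. destruct Q as [|a Q']; [congruence|].
  unfold apply_fin. simpl length. simpl apply_fin_aux. f_equal.
  apply apply_fin_aux_fuel; rewrite length_skipn; cbn [length]; lia.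
Qed.

Lemma apply_fin_app (c : nat) (A B : fword) : length A = (c * k)%nat ->
  apply_fin k sigma (A ++ B) = apply_fin k sigma A ++ apply_fin k sigma B.
Proof.
  revert A. induction c as [|c IH]; intros A HA.
  - destruct A; simpl in HA; [reflexivity|lia].
  - assert (HA0 : A <> []) by (intros ->; simpl in HA; lia).
    rewrite (apply_fin_cons A HA0), apply_fin_cons by (destruct A; simpl; congruence).
    rewrite firstn_app, skipn_app. replace (k - length A)%nat with 0%nat by lia.
    simpl. rewrite app_nil_r, <- app_assoc. f_equal.
    apply IH. rewrite length_skipn. lia.
Qed.

Definition fblock (Q : fword) (b : nat) : fword := firstn k (skipn (b * k) Q).

Lemma fblock_firstn (Q : fword) (c b : nat) :
  (b < c)%nat -> fblock (firstn (c * k) Q) b = fblock Q b.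
Proof.
  intros Hb. unfold fblock. rewrite skipn_firstn_comm, firstn_firstn.
  f_equal. assert (b * k + k <= c * k)%nat by nia. lia.
Qed.

Lemma apply_fin_concat (c : nat) (Q : fword) : length Q = (c * k)%nat ->
  apply_fin k sigma Q = concat_upto (fun b => sigma (fblock Q b)) c.
Proof.
  revert Q. induction c as [|c IH]; intros Q HQ.
  - destruct Q; simpl in HQ; [reflexivity|lia].
  - rewrite <- (firstn_skipn (c * k) Q) at 1.
    rewrite (apply_fin_app c), IH by (rewrite length_firstn; lia).
    simpl. f_equal.
    + apply concat_upto_ext. intros b Hb. rewrite fblock_firstn; auto.
    + assert (Hs : length (skipn (c * k) Q) = k) by (rewrite length_skipn; lia).
      rewrite apply_fin_cons by (intros Hn; rewrite Hn in Hs; simpl in Hs; lia).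
      rewrite (skipn_all2 (skipn (c * k) Q)) by lia.
      rewrite app_nil_r. reflexivity.
Qed.

Lemma fblock_is_prefix (A : fword) (e : iword) (b : nat) :
  is_prefix A e -> ((b + 1) * k <= length A)%nat -> fblock A b = block k e b.
Proof.
  intros HA Hb. unfold fblock, block.
  apply nth_ext with (d := false) (d' := false).
  - rewrite length_map, length_seq, length_firstn, length_skipn. lia.
  - intros n Hn. rewrite length_firstn, length_skipn in Hn.
    rewrite nth_firstn. destruct (n <? k) eqn:E; [|apply Nat.ltb_ge in E; lia].
    rewrite nth_skipn, HA, nth_map_seq0 by lia. reflexivity.
Qed.

Definition truncate (A : fword) : fword := firstn (k * (length A / k)) A.

Lemma truncate_length (A : fword) : length (truncate A) = ((length A / k) * k)%nat.
Proof.
  unfold truncate. rewrite length_firstn.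
  pose proof (Nat.Div0.mul_div_le (length A) k). lia.
Qed.

Lemma truncate_mono (A B : fword) : prefix A B -> prefix (truncate A) (truncate B).
Proof.
  intros [C ->]. unfold truncate.
  set (a := (k * (length A / k))%nat). set (a' := (k * (length (A ++ C) / k))%nat).
  assert (Ha : (a <= length A)%nat) by apply Nat.Div0.mul_div_le.
  assert (Haa : (a <= a')%nat).
  { apply Nat.mul_le_mono_l, Nat.Div0.div_le_mono. rewrite length_app; lia. }
  exists (skipn a (firstn a' (A ++ C))).
  rewrite <- (firstn_skipn a (firstn a' (A ++ C))) at 1. f_equal.
  rewrite firstn_firstn, firstn_app. replace (Nat.min a a') with a by lia.
  replace (a - length A)%nat with 0%nat by lia. simpl. rewrite app_nil_r. auto.
Qed.

(* The part of sigma(e) determined by a finite prefix A of e. *)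
Definition image_prefix (A : fword) : fword := apply_fin k sigma (truncate A).

Lemma image_prefix_mono (A B : fword) : prefix A B -> prefix (image_prefix A) (image_prefix B).
Proof.
  intros H. destruct (truncate_mono A B H) as [D HD]. unfold image_prefix. rewrite HD.
  rewrite (apply_fin_app (length A / k)) by apply truncate_length.
  exists (apply_fin k sigma D). reflexivity.
Qed.

Lemma image_prefix_concat (A : fword) (e : iword) : is_prefix A e ->
  image_prefix A = concat_upto (fun b => sigma (block k e b)) (length A / k).
Proof.
  intros HA. unfold image_prefix. rewrite (apply_fin_concat (length A / k)) by apply truncate_length.
  apply concat_upto_ext. intros b Hb. f_equal. apply fblock_is_prefix.
  - apply is_prefix_firstn; auto.
  - rewrite truncate_length. nia.
Qed.

Lemma image_prefix_length (A : fword) (e : iword) : is_prefix A e ->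
  length (image_prefix A) = prefix_len (fun b => sigma (block k e b)) (length A / k).
Proof. intros HA. rewrite (image_prefix_concat A e HA), concat_upto_length. reflexivity. Qed.

Lemma image_prefix_nth (A : fword) (e : iword) (b q : nat) :
  is_prefix A e -> (b < length A / k)%nat -> (q < length (sigma (block k e b)))%nat ->
  (prefix_len (fun b => sigma (block k e b)) b + q < length (image_prefix A))%nat /\
  nth (prefix_len (fun b => sigma (block k e b)) b + q) (image_prefix A) false =
  nth q (sigma (block k e b)) false.
Proof.
  intros HA Hb Hq. rewrite (image_prefix_concat A e HA). split.
  - rewrite concat_upto_length.
    pose proof (prefix_len_mono (fun b => sigma (block k e b)) (S b) (length A / k) Hb).
    simpl in *. lia.
  - apply concat_upto_nth; auto.
Qed.

Lemma image_prefix_is_prefix (A : fword) (e e' : iword) :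
  is_prefix A e -> is_concat (fun b => sigma (block k e b)) e' -> is_prefix (image_prefix A) e'.
Proof.
  intros HA Hc i Hi. rewrite (image_prefix_length A e HA) in Hi.
  destruct (prefix_len_locate _ _ _ Hi) as [b [q [H1 [H2 ->]]]].
  rewrite (proj2 (image_prefix_nth A e b q HA H1 H2)). symmetry. apply Hc; auto.
Qed.

Lemma iter_image_prefix_mono (j : nat) (A B : fword) :
  prefix A B -> prefix (Nat.iter j image_prefix A) (Nat.iter j image_prefix B).
Proof. induction j as [|j IH]; intros H; simpl; auto. apply image_prefix_mono, IH; auto. Qed.

Definition nonerasing_often (e : iword) : Prop :=
  forall L, exists b, (L <= b)%nat /\ sigma (block k e b) <> [].

(* e' = sigma(e), an infinite word because infinitely many blocks of e survive. *)
Definition sigma_step (e e' : iword) : Prop :=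
  nonerasing_often e /\ is_concat (fun b => sigma (block k e b)) e'.

Lemma prefix_len_unbounded (e : iword) : nonerasing_often e ->
  forall L, exists c, (L <= prefix_len (fun b => sigma (block k e b)) c)%nat.
Proof.
  intros H L; induction L as [|L [c Hc]]; [exists 0%nat; lia|].
  destruct (H c) as [b [Hb Hne]]. exists (S b). simpl.
  pose proof (prefix_len_mono (fun b => sigma (block k e b)) c b Hb).
  destruct (sigma (block k e b)); [congruence|]. simpl. lia.
Qed.

Lemma image_prefix_grows (e : iword) : nonerasing_often e ->
  forall L, exists M, forall A, is_prefix A e -> (M <= length A)%nat ->
    (L <= length (image_prefix A))%nat.
Proof.
  intros H L. destruct (prefix_len_unbounded e H L) as [c Hc].
  exists (c * k)%nat. intros A HA HM. rewrite (image_prefix_length A e HA).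
  assert (Hc' : (c <= length A / k)%nat) by (apply Nat.div_le_lower_bound; lia).
  pose proof (prefix_len_mono (fun b => sigma (block k e b)) c _ Hc'). lia.
Qed.

Inductive chain : nat -> iword -> iword -> Prop :=
  | chain_refl (y : iword) : chain 0 y y
  | chain_cons (m : nat) (y y' z : iword) :
      infinitely_many_ones y -> sigma_step y y' -> chain m y' z -> chain (S m) y z.

Lemma chain_snoc (m : nat) (y u z : iword) :
  chain m y u -> infinitely_many_ones u -> sigma_step u z -> chain (S m) y z.
Proof.
  induction 1 as [y|m y y' u Hy Hs _ IH]; intros Hu Hz.
  - apply (chain_cons 0 y z z); auto. constructor.
  - apply (chain_cons (S m) y y' z); auto.
Qed.

Lemma chain_inner (m : nat) (y z : iword) : chain m y z ->
  forall j, (j < m)%nat ->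
    exists u u', chain j y u /\ infinitely_many_ones u /\ sigma_step u u'.
Proof.
  induction 1 as [y|m y y' z Hy Hs Hc IH]; intros j Hj; [lia|].
  destruct j as [|j].
  - exists y, y'. split; [constructor|split; assumption].
  - destruct (IH j ltac:(lia)) as [u [u' [Hu Hrest]]].
    exists u, u'. split; [apply (chain_cons j y y' u); auto|exact Hrest].
Qed.

Lemma chain_image_prefix (j : nat) (y u : iword) : chain j y u ->
  forall A, is_prefix A y -> is_prefix (Nat.iter j image_prefix A) u.
Proof.
  induction 1 as [y|j y y' u _ [_ Hc] _ IH]; intros A HA; auto.
  rewrite Nat.iter_succ_r. apply IH. apply (image_prefix_is_prefix A y); auto.
Qed.

Lemma chain_image_grows (j : nat) (y u : iword) : chain j y u ->
  forall L, exists N0, forall A, is_prefix A y -> (N0 <= length A)%nat ->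
    (L <= length (Nat.iter j image_prefix A))%nat.
Proof.
  induction 1 as [y|j y y' u _ [Hne Hc] _ IH]; intros L; [exists L; auto|].
  destruct (IH L) as [M HM]. destruct (image_prefix_grows y Hne M) as [N0 HN0].
  exists N0. intros A HA HA'. rewrite Nat.iter_succ_r.
  apply HM; [apply (image_prefix_is_prefix A y); auto|]. apply HN0; auto.
Qed.

Lemma aperiodic_preimage (t s : iword) :
  (forall b, sigma (block k t b) <> []) -> is_concat (fun b => sigma (block k t b)) s ->
  ~ eventually_periodic s -> ~ eventually_periodic t.
Proof.
  intros Hne Hc Hs [N [p [Hp Hper]]]. apply Hs.
  apply (concat_eventually_periodic _ s N p Hp Hne); auto.
  intros b Hb. f_equal. unfold block. apply map_ext_in. intros i _.
  replace ((b + p) * k + i)%nat with ((b * k + i) + p * k)%nat by lia.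
  apply (periodic_multiple t N p Hper). nia.
Qed.

Lemma block_prepend (Q : fword) (t : iword) (c d : nat) : length Q = (c * k)%nat ->
  block k (prepend Q t) (c + d) = block k t d.
Proof.
  intros HQ. unfold block. apply map_ext_in. intros i Hi. apply in_seq in Hi.
  rewrite prepend_ge by nia. f_equal. nia.
Qed.

Lemma is_concat_prepend (Q : fword) (t s : iword) (c : nat) : length Q = (c * k)%nat ->
  is_concat (fun b => sigma (block k t b)) s ->
  is_concat (fun b => sigma (block k (prepend Q t) b)) (prepend (apply_fin k sigma Q) s).
Proof.
  intros HQ Hc b q Hq.
  set (ws := fun b => sigma (block k (prepend Q t) b)) in *.
  set (wsQ := fun b => sigma (fblock Q b)).
  assert (Heq : forall b, (b < c)%nat -> ws b = wsQ b).
  { intros b0 Hb0. unfold ws, wsQ. f_equal. symmetry.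
    apply fblock_is_prefix; [apply is_prefix_prepend|nia]. }
  assert (HAF : apply_fin k sigma Q = concat_upto wsQ c) by (apply apply_fin_concat; auto).
  destruct (Nat.lt_ge_cases b c) as [Hbc|Hbc].
  - rewrite (prefix_len_ext ws wsQ b) by (intros; apply Heq; lia).
    change (sigma (block k (prepend Q t) b)) with (ws b) in *. rewrite (Heq b Hbc) in *.
    pose proof (prefix_len_mono wsQ (S b) c Hbc).
    rewrite HAF, prepend_lt by (rewrite concat_upto_length; simpl in *; lia).
    apply concat_upto_nth; auto.
  - replace b with (c + (b - c))%nat in * by lia.
    assert (Hshift : forall d, ws (c + d)%nat = sigma (block k t d))
      by (intros d; unfold ws; rewrite block_prepend with (c := c); auto).
    rewrite (prefix_len_add ws _ c (b - c) Hshift), (prefix_len_ext ws wsQ c) by auto.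
    assert (HL : length (apply_fin k sigma Q) = prefix_len wsQ c)
      by (rewrite HAF, concat_upto_length; auto).
    rewrite prepend_ge, HL by lia.
    replace (prefix_len wsQ c + prefix_len (fun b => sigma (block k t b)) (b - c) + q
             - prefix_len wsQ c)%nat
      with (prefix_len (fun b => sigma (block k t b)) (b - c) + q)%nat by lia.
    change (sigma (block k (prepend Q t) (c + (b - c)))) with (ws (c + (b - c))%nat) in *.
    rewrite Hshift in *. apply Hc; auto.
Qed.

Hypothesis sigma_optimal : optimal k sigma.

Lemma optimal_preimage (s : iword) : exists t, (forall b, sigma (block k t b) <> []) /\
  is_concat (fun b => sigma (block k t b)) s.
Proof.
  destruct (sigma_optimal s) as [bb [Hbb Hc]].
  set (t := fun i => nth (i mod k) (bb (i / k)%nat) false).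
  assert (Hblock : forall j, block k t j = bb j).
  { intros j. apply nth_ext with (d := false) (d' := false).
    - unfold block. rewrite length_map, length_seq. destruct (Hbb j); lia.
    - intros n Hn. unfold block in *. rewrite length_map, length_seq in Hn.
      rewrite nth_map_seq0 by lia. unfold t.
      replace (j * k + n)%nat with (n + j * k)%nat by lia.
      rewrite Nat.div_add, Nat.Div0.mod_add, Nat.div_small, Nat.mod_small by lia. reflexivity. }
  exists t. split.
  - intros b. rewrite Hblock. apply Hbb.
  - intros j q Hq. rewrite (prefix_len_ext _ (fun i => sigma (bb i))) by (intros; rewrite Hblock; auto).
    rewrite Hblock in *. apply Hc; auto.
Qed.

Lemma lift_step (Q : fword) (c : nat) (y' : iword) : length Q = (c * k)%nat ->
  ~ eventually_periodic y' -> is_prefix (apply_fin k sigma Q) y' ->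
  exists y, is_prefix Q y /\ ~ eventually_periodic y /\ sigma_step y y'.
Proof.
  intros HQ Hap Hpre.
  destruct (optimal_preimage (tail (length (apply_fin k sigma Q)) y')) as [t [Hne Hc]].
  assert (Hapt : ~ eventually_periodic t).
  { apply (aperiodic_preimage t _ Hne Hc). intros Hper. apply Hap.
    apply (eventually_periodic_tail _ _ Hper). }
  exists (prepend Q t). split; [apply is_prefix_prepend|]. split; [|split].
  - intros Hper. apply Hapt. apply (eventually_periodic_prepend _ _ Hper).
  - intros L. exists (c + L)%nat. split; [lia|]. rewrite block_prepend with (c := c); auto.
  - rewrite <- (prepend_tail (apply_fin k sigma Q) y') by auto.
    apply is_concat_prepend with (c := c); auto.
Qed.

Definition covers (r : fword) (m : nat) : Prop :=
  forall z, ~ eventually_periodic z -> exists y, is_prefix r y /\ ~ eventually_periodic y /\ chain m y z.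

Lemma covers_prefix (P r : fword) (m : nat) : prefix P r -> covers r m -> covers P m.
Proof.
  intros HP H z Hz. destruct (H z Hz) as [y [Hy Hrest]].
  exists y. split; auto. apply (is_prefix_prefix P r y); auto.
Qed.

Lemma covers_succ (r : fword) (m : nat) : covers r m -> covers r (S m).
Proof.
  intros H z Hz.
  destruct (lift_step [] 0%nat z eq_refl Hz) as [u [_ [Hu Hstep]]].
  { intros i Hi. simpl in Hi. lia. }
  destruct (H u Hu) as [y [Hp [Hy Hc]]].
  exists y. split; auto. split; auto. apply (chain_snoc m y u z); auto. apply aperiodic_ones; auto.
Qed.

Lemma covers_plus (r : fword) (m d : nat) : covers r m -> covers r (m + d).
Proof.
  intros H; induction d as [|d IH]; [rewrite Nat.add_0_r; auto|].
  rewrite Nat.add_succ_r. apply covers_succ; auto.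
Qed.

Lemma covers_erased (Q : fword) (c : nat) : length Q = (c * k)%nat ->
  apply_fin k sigma Q = [] -> covers Q 1.
Proof.
  intros HQ Herased z Hz.
  destruct (lift_step Q c z HQ Hz) as [y [Hp [Hy Hstep]]].
  { rewrite Herased. intros i Hi. simpl in Hi. lia. }
  exists y. split; auto. split; auto.
  apply (chain_cons 0 y z z); [apply aperiodic_ones; auto|auto|constructor].
Qed.

Lemma covers_pullback (Q R : fword) (c m : nat) : length Q = (c * k)%nat ->
  prefix (apply_fin k sigma Q) R -> covers R m -> covers Q (S m).
Proof.
  intros HQ HR H z Hz. destruct (H z Hz) as [u [Hpu [Hu Hc]]].
  destruct (lift_step Q c u HQ Hu) as [y [Hp [Hy Hstep]]].
  { apply (is_prefix_prefix _ R); auto. }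
  exists y. split; auto. split; auto.
  apply (chain_cons m y u z); auto. apply aperiodic_ones; auto.
Qed.

Lemma krounding_aligned (w r : fword) : is_krounding k w r -> length r = ((length r / k) * k)%nat.
Proof. intros [_ [Hm _]]. pose proof (Nat.div_mod_eq (length r) k). lia. Qed.

Hypothesis sigma_strongly_erasing : strongly_erasing k sigma.

(* Strong erasure: following the roundings r 0, ..., r (n-1) of P backwards,
   every finite word covers in some number m >= 1 of steps. *)
Lemma covers_exists (P : fword) : exists m, (1 <= m)%nat /\ covers P m.
Proof.
  destruct (sigma_strongly_erasing P) as [n [r [Hn [H0 [Hround Hlast]]]]].
  assert (Haligned : forall j, (j <= n - 1)%nat -> length (r j) = ((length (r j) / k) * k)%nat).
  { intros [|j] Hj; [apply (krounding_aligned P); auto|].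
    apply (krounding_aligned (apply_fin k sigma (r (S j - 1)%nat))), Hround. lia. }
  assert (Hback : forall d, (d <= n - 1)%nat -> covers (r (n - 1 - d)%nat) (S d)).
  { induction d as [|d IH]; intros Hd.
    - rewrite Nat.sub_0_r. apply (covers_erased _ _ (Haligned (n - 1)%nat (le_n _))); auto.
    - set (j := (n - 1 - S d)%nat).
      destruct (Hround (S j) ltac:(unfold j; lia)) as [[v Hv] _].
      replace (S j - 1)%nat with j in Hv by lia.
      replace (n - 1 - d)%nat with (S j) in IH by (unfold j; lia).
      apply (covers_pullback (r j) (r (S j)) _ (S d) (Haligned j ltac:(unfold j; lia))).
      + exists v; auto.
      + apply IH; lia. }
  exists n. split; [lia|].
  destruct H0 as [[v Hv] _]. apply (covers_prefix P (r 0%nat)); [exists v; auto|].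
  pose proof (Hback (n - 1)%nat (le_n _)) as Hc.
  replace (n - 1 - (n - 1))%nat with 0%nat in Hc by lia.
  replace (S (n - 1)) with n in Hc by lia. exact Hc.
Qed.

Definition rich_beyond (n : nat) (A : fword) : Prop :=
  (exists i, (n <= i)%nat /\ (i < length A)%nat /\ nth i A false = true) /\
  (exists b, (n <= b)%nat /\ ((b + 1) * k <= length A)%nat /\ sigma (fblock A b) <> []).

Lemma chain_rich_eventually (m : nat) (y z : iword) (j n : nat) : chain m y z -> (j < m)%nat ->
  exists N0, forall N, (N0 <= N)%nat -> rich_beyond n (Nat.iter j image_prefix (first_letters N y)).
Proof.
  intros Hc Hj. destruct (chain_inner m y z Hc j Hj) as [u [u' [Hu [Hones [Hne _]]]]].
  destruct (Hones n) as [i [Hi Hui]]. destruct (Hne n) as [b [Hb Hbne]].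
  destruct (chain_image_grows j y u Hu (Nat.max (S i) ((b + 1) * k))) as [N0 HN0].
  exists N0. intros N HN.
  set (A := Nat.iter j image_prefix (first_letters N y)).
  assert (Hpre : is_prefix A u)
    by (apply (chain_image_prefix j y u Hu), first_letters_is_prefix).
  assert (Hlen : (Nat.max (S i) ((b + 1) * k) <= length A)%nat)
    by (apply HN0; [apply first_letters_is_prefix|rewrite first_letters_length; lia]).
  split.
  - exists i. split; [auto|split; [lia|]]. rewrite Hpre by lia. auto.
  - exists b. split; [auto|split; [lia|]]. rewrite (fblock_is_prefix A u b Hpre); [auto|lia].
Qed.

Definition stage_spec (n : nat) (P w P' : fword) (m : nat) : Prop :=
  prefix P P' /\ (1 <= m)%nat /\ prefix w (Nat.iter m image_prefix P') /\
  forall j, (j <= n)%nat -> rich_beyond n (Nat.iter j image_prefix P').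

Lemma stage (n : nat) (P w : fword) : exists P' m, stage_spec n P w P' m.
Proof.
  destruct (covers_exists P) as [m0 [Hm0 Hcov]].
  set (u := prepend w powers_of_two_word).
  assert (Hu : ~ eventually_periodic u).
  { intros Hper. apply powers_of_two_word_aperiodic, (eventually_periodic_prepend w _ Hper). }
  destruct (covers_plus P m0 n Hcov u Hu) as [y [HPy [_ Hc]]].
  destruct (eventually_forall_le
              (fun j N => rich_beyond n (Nat.iter j image_prefix (first_letters N y))) n)
    as [N1 HN1].
  { intros j Hj. apply (chain_rich_eventually (m0 + n) y u); auto; lia. }
  destruct (chain_image_grows _ y u Hc (length w)) as [N2 HN2].
  set (N := Nat.max (Nat.max N1 N2) (length P)).
  exists (first_letters N y), (m0 + n)%nat. split; [|split; [lia|split]].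
  - apply (is_prefix_comparable _ _ y HPy (first_letters_is_prefix N y)).
    rewrite first_letters_length. lia.
  - apply (is_prefix_comparable _ _ u (is_prefix_prepend w _)).
    + apply (chain_image_prefix _ y u Hc), first_letters_is_prefix.
    + apply HN2; [apply first_letters_is_prefix|rewrite first_letters_length; lia].
  - intros j Hj. apply HN1; auto. lia.
Qed.

Lemma limit_orbit (PP : nat -> fword) :
  (forall n, prefix (PP n) (PP (S n))) ->
  (forall n j, (j <= n)%nat -> rich_beyond n (Nat.iter j image_prefix (PP (S n)))) ->
  exists E : nat -> iword,
    (forall j n, is_prefix (Nat.iter j image_prefix (PP n)) (E j)) /\
    (forall j, sigma_step (E j) (E (S j)) /\ infinitely_many_ones (E j)).
Proof.
  intros Hnext Hrich.
  assert (Hnest : forall n n', (n <= n')%nat -> prefix (PP n) (PP n')).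
  { induction 1; [apply prefix_refl|]. eapply prefix_trans; eauto. }
  set (E := fun j i => nth i (Nat.iter j image_prefix (PP (S (Nat.max j i)))) false).
  assert (Epre : forall j n, is_prefix (Nat.iter j image_prefix (PP n)) (E j)).
  { intros j n i Hi. unfold E.
    destruct (Hrich (Nat.max j i) j ltac:(lia)) as [[i0 [Hi0 [Hlen _]]] _].
    destruct (Nat.le_ge_cases n (S (Nat.max j i))) as [Hle|Hge].
    - apply prefix_nth; auto. apply iter_image_prefix_mono, Hnest; auto.
    - symmetry. apply prefix_nth; [apply iter_image_prefix_mono, Hnest; auto|lia]. }
  exists E. split; auto. intros j. split; [split|].
  - intros L. destruct (Hrich (Nat.max j L) j ltac:(lia)) as [_ [b [Hb [Hfit Hne]]]].
    exists b. split; [lia|]. rewrite <- (fblock_is_prefix _ (E j) b (Epre j _) Hfit). auto.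
  - intros b q Hq. set (n := Nat.max j ((b + 1) * k)).
    destruct (Hrich n j ltac:(unfold n; lia)) as [[i0 [Hi0 [Hlen _]]] _].
    set (A := Nat.iter j image_prefix (PP (S n))) in Hlen.
    assert (Hb : (b < length A / k)%nat).
    { assert (b + 1 <= length A / k)%nat by (apply Nat.div_le_lower_bound; unfold n in *; lia).
      lia. }
    destruct (image_prefix_nth A (E j) b q (Epre j _) Hb Hq) as [Hpos Hnth].
    rewrite <- Hnth. symmetry. apply (Epre (S j) (S n)). exact Hpos.
  - intros L. destruct (Hrich (Nat.max j L) j ltac:(lia)) as [[i [Hi [Hlen Hone]]] _].
    exists i. split; [lia|]. rewrite <- (Epre j _ i Hlen). auto.
Qed.

Lemma orbit_through_prefixes (W : nat -> fword) :
  exists (E : nat -> iword) (h : nat -> nat),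
    is_prefix (W 0%nat) (E 0%nat) /\
    (forall j, sigma_step (E j) (E (S j)) /\ infinitely_many_ones (E j)) /\
    (forall n, (1 <= n)%nat -> (1 <= h n)%nat /\ is_prefix (W n) (E (h n))).
Proof.
  assert (F : forall n P, {Pm : fword * nat | stage_spec n P (W (S n)) (fst Pm) (snd Pm)}).
  { intros n P. apply constructive_indefinite_description.
    destruct (stage n P (W (S n))) as [P' [m H]]. exists (P', m); exact H. }
  set (PP := fix PP n := match n with O => W 0%nat | S n' => fst (proj1_sig (F n' (PP n'))) end).
  set (h := fun n => match n with O => 1%nat | S n' => snd (proj1_sig (F n' (PP n'))) end).
  assert (HS : forall n, stage_spec n (PP n) (W (S n)) (PP (S n)) (h (S n)))
    by (intros n; exact (proj2_sig (F n (PP n)))).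
  destruct (limit_orbit PP) as [E [Epre Estep]].
  { intros n. apply (HS n). }
  { intros n j Hj. apply (HS n); auto. }
  exists E, h. split; [apply (Epre 0%nat 0%nat)|split; [exact Estep|]].
  intros [|n] Hn; [lia|]. destruct (HS n) as [_ [Hm [Hw _]]]. split; auto.
  apply (is_prefix_prefix _ _ _ Hw), Epre.
Qed.

Lemma f_sigma_step (weps : fword) (e e' : iword) : erasing_subst k sigma weps ->
  sigma_step e e' -> infinitely_many_ones e -> f_sigma k sigma weps (inf_value e) = inf_value e'.
Proof.
  intros [Hlw Her] [Hne Hc] Ho.
  destruct (Ho 0%nat) as [i0 [_ Hi0]].
  pose proof (inf_value_pos e i0 Hi0). pose proof (inf_value_bounds e).
  unfold f_sigma. destruct (Rlt_dec 0 (inf_value e)); [|lra].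
  destruct (Rle_dec (inf_value e) 1); [|lra].
  rewrite tilde_inf_value by auto.
  destruct (excluded_middle_informative _) as [Hw|Hw].
  - exfalso. destruct (Hne 0%nat) as [b [_ Hb]]. apply Hb, Her.
    + unfold block. rewrite length_map, length_seq. auto.
    + apply nth_ext with (d := false) (d' := false); unfold block; rewrite length_map, length_seq; auto.
      intros n Hn. rewrite nth_map_seq0, Hw by lia.
      replace (b * k + n)%nat with (n + b * k)%nat by lia.
      rewrite Nat.Div0.mod_add, Nat.mod_small by lia. auto.
  - apply concat_value_eq; auto. apply prefix_len_unbounded; auto.
Qed.

End BlockMap.

(* The orbit of x = 0.(E 0) under f_sigma is 0.(E 0), 0.(E 1), .... *)
Theorem corollary2 (k : nat) (sigma : fword -> fword) (weps : fword) :
  (2 <= k)%nat ->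
  erasing_subst k sigma weps ->
  strongly_erasing k sigma ->
  weps <> repeat true k ->
  optimal k sigma ->
  forall W : nat -> fword,
    exists x : R, in_cyl (W 0%nat) x /\
      exists h : nat -> nat,
        forall n : nat, (1 <= n)%nat ->
          (1 <= h n)%nat /\ in_cyl (W n) (Nat.iter (h n) (f_sigma k sigma weps) x).
Proof.
  intros Hk Herase Hstrong _ Hopt W.
  destruct (orbit_through_prefixes k sigma ltac:(lia) Hopt Hstrong W)
    as [E [h [H0 [Hstep Hh]]]].
  assert (Horbit : forall j,
             Nat.iter j (f_sigma k sigma weps) (inf_value (E 0%nat)) = inf_value (E j)).
  { induction j as [|j IH]; simpl; auto. rewrite IH.
    destruct (Hstep j). apply f_sigma_step; auto. lia. }
  exists (inf_value (E 0%nat)). split; [apply in_cyl_is_prefix; auto|].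
  exists h. intros n Hn. destruct (Hh n Hn) as [H1 H2]. split; auto.
  rewrite Horbit. apply in_cyl_is_prefix; auto.
Qed.
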